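(* Let $p$ be a prime and $\alpha\geqslant 2$ an integer. For $\beta\in\mathbb{N}$, $l,n\in\mathbb{N}$ and $r\in\mathbb{Z}$ put $$T_{l,\beta}^{(p)}(n,r)=\frac{l!\,p^l}{\lfloor n/p^{\beta-1}\rfloor!}\sum_{k\equiv r\ (\mathrm{mod}\ p^{\beta})}\binom nk(-1)^k\binom{(k-r)/p^{\beta}}l.$$ Then for all $l,n\in\mathbb{N}$ and $r\in\mathbb{Z}$, $$T_{l,\alpha+1}^{(p)}(n,r)\equiv(-1)^{\{r\}_p}\binom{\{n\}_p}{\{r\}_p}T_{l,\alpha}^{(p)}\Big(\Big\lfloor\frac np\Big\rfloor,\Big\lfloor\frac rp\Big\rfloor\Big)\pmod p.$$
   Context: The sum runs over all integers $k\equiv r\pmod{p^\beta}$, with $\binom nk=0$ unless $0\le k\le n$; $\binom xl=x(x-1)\cdots(x-l+1)/l!$ for any $x$. For an integer $a$ and positive integer $m$, $\{a\}_m$ is the least nonnegative residue of $a$ modulo $m$. For rationals (or elements of $\mathbb{Q}_p$) $u,v$, $u\equiv v\pmod{p^a}$ means $\operatorname{ord}_p(u-v)\ge a$. *)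

From mathcomp Require Import all_boot all_order all_algebra.
Set Implicit Arguments. Unset Strict Implicit. Unset Printing Implicit Defensive.
Import Order.TTheory GRing.Theory Num.Theory.
Local Open Scope ring_scope.

Definition gbinom (x : rat) (l : nat) : rat :=
  (\prod_(i < l) (x - i%:R)) / (l`!)%:R.

(* T^{(p)}_{l,beta}(n,r); the sum over k = r mod p^beta reduces to 0 <= k <= n,
   since binom n k = 0 otherwise.  floor(n / p^(beta-1)) is n %/ p^(beta-1)
   (beta >= 1 intended). *)
Definition T (p l beta n : nat) (r : int) : rat :=
  ((l`!)%:R * (p ^ l)%:R / ((n %/ p ^ (beta - 1))`!)%:R) *
  \sum_(0 <= k < n.+1 | ((p ^ beta)%:Z %| (k%:Z - r))%Z)
     ('C(n, k))%:R * (-1) ^+ k *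
     gbinom (((k%:Z - r) %/ (p ^ beta)%:Z)%Z)%:~R l.

(* u = v (mod p^a) for rationals: ord_p(u - v) >= a.  For a rational
   x = numq x / denq x in lowest terms, ord_p x >= a (a >= 1) iff p^a | numq x
   (x = 0 included since numq 0 = 0). *)
Definition ratcong (p a : nat) (u v : rat) : bool :=
  ((p ^ a)%:Z %| numq (u - v))%Z.

(* Write [S] for the shift [f |-> (t |-> f (t - 1))] and [Δ = 1 - S].  The sum defining
   [T_{l,β}(n,r)] is [(Δ^n g_β)(r)], where [g_β u = binom(-u/p^β, l)] on multiples of [p^β]
   and [0] elsewhere: [g_β] is the [β]-fold dilation [u |-> p u] of [g_0 u = binom(-u, l)].
   Over [Z], [(1 - X)^p = (1 - X^p) + p (1 - X) W], and [1 - X^p] acts on a dilated function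
   as the dilation of [Δ]; so for [n = p M + n0],
     [Δ^n (dil g) = Σ_i C(M,i) p^i Δ^n0 (Δ W)^i dil (Δ^(M-i) g)].
   Counting powers of [p] with Legendre's [v_p(N!) = N/p + v_p((N/p)!)] shows that
   [l! p^l Δ^N g_β] is divisible by [p^(v_p(⌊N/p^(β-1)⌋!))], i.e. [T] is [p]-integral, and
   that the terms [i > 0] carry one more factor [p].  In the term [i = 0], evaluated at [r],
   the window [r - n0, r] with [n0 < p] contains one multiple of [p], which yields
   [(-1)^{r mod p} C(n mod p, r mod p) (Δ^M g_α)(⌊r/p⌋)]. *)

From mathcomp Require Import all_boot all_algebra.
From mathcomp Require Import zify ring.
Import GRing.Theory Num.Theory.

Set Implicit Arguments.
Unset Strict Implicit.
Unset Printing Implicit Defensive.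

Section FactorialValuation.

Variable p : nat.
Hypothesis p_pr : prime p.

Lemma logn_fact_rec N : logn p N`! = N %/ p + logn p (N %/ p)`!.
Proof.
have p_gt0 := prime_gt0 p_pr.
elim: N => [|N IH]; first by rewrite div0n fact0 logn1.
rewrite factS lognM ?fact_gt0 // IH divnS //.
have [/dvdnP [c defN] | ndvd] := boolP (p %| N.+1); last first.
  by rewrite logn_coprime ?prime_coprime.
have c_gt0 : 0 < c by move: defN; case: c.
have -> : N %/ p = c.-1.
  by have := divnS N p_gt0; rewrite defN dvdn_mull // mulnK //=; lia.
rewrite defN lognM // (logn_prime p p_pr) eqxx.
have fact_c : c`! = c * c.-1`! by case: c c_gt0 {defN}.
by rewrite /= add1n prednK // fact_c lognM ?fact_gt0 //; lia.
Qed.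

Lemma logn_fact_lt i : 0 < i -> logn p i`! < i.
Proof.
elim/ltn_ind: i => i IH i_gt0; rewrite logn_fact_rec.
have [->|ip_gt0] := posnP (i %/ p); first by rewrite fact0 logn1.
have := IH _ (ltn_Pdiv (prime_gt1 p_pr) i_gt0) ip_gt0.
have : 2 * (i %/ p) <= i.
  by apply: leq_trans (leq_divM i p); rewrite mulnC leq_mul2l prime_gt1 ?orbT.
lia.
Qed.

Lemma logn_fact_divn_exp c x y : y <= x ->
  logn p (x %/ p ^ c)`! + logn p y`! <= logn p x`! + logn p (y %/ p ^ c)`!.
Proof.
elim: c x y => [|c IH] x y le_yx; first by rewrite !divn1 addnC.
rewrite expnS !divnMA.
have := IH _ _ (leq_div2r p le_yx); have := leq_div2r p le_yx.
rewrite (logn_fact_rec x) (logn_fact_rec y); lia.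
Qed.

Lemma logn_fact_bin M i : i <= M ->
  logn p M`! = logn p 'C(M, i) + logn p i`! + logn p (M - i)`!.
Proof.
by move=> le_iM; rewrite -(bin_fact le_iM) !lognM ?muln_gt0 ?bin_gt0 ?fact_gt0 // addnA.
Qed.

Lemma logn_fact_divn_exp_bin c M i : 0 < i <= M ->
  logn p (M %/ p ^ c)`! < logn p 'C(M, i) + i + logn p ((M - i) %/ p ^ c)`!.
Proof.
case/andP=> i_gt0 le_iM.
have := logn_fact_divn_exp c (leq_subr i M); have := logn_fact_bin le_iM.
have := logn_fact_lt i_gt0; lia.
Qed.

End FactorialValuation.

Local Open Scope ring_scope.

Definition pact (P : {poly int}) (f : int -> int) (t : int) : int :=
  \sum_(i < size P) P`_i * f (t - i%:Z).

Section PolyAction.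

Implicit Types (P Q : {poly int}) (f g : int -> int) (c t : int).

Lemma pact_widen n P f t : (size P <= n)%N ->
  pact P f t = \sum_(i < n) P`_i * f (t - i%:Z).
Proof.
move=> le_Pn; rewrite /pact (big_ord_widen n (fun i => P`_i * f (t - i%:Z))) //.
rewrite big_mkcond /=; apply: eq_bigr => i _; case: ltnP => // le_Pi.
by rewrite nth_default // mul0r.
Qed.

Lemma eq_pact P f g : f =1 g -> pact P f =1 pact P g.
Proof. by move=> eq_fg t; apply: eq_bigr => i _; rewrite eq_fg. Qed.

Lemma pact0 f t : pact 0 f t = 0.
Proof. by rewrite /pact size_poly0 big_ord0. Qed.

Lemma pactC c f t : pact c%:P f t = c * f t.
Proof. by rewrite (@pact_widen 1) ?size_polyC ?leq_b1 // big_ord1 coefC subr0. Qed.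

Lemma pact1 f t : pact 1 f t = f t.
Proof. by rewrite -polyC1 pactC mul1r. Qed.

Lemma pactD P Q f t : pact (P + Q) f t = pact P f t + pact Q f t.
Proof.
set n := maxn (size P) (size Q).
rewrite (@pact_widen n) ?(leq_trans (size_polyD _ _)) //.
rewrite (@pact_widen n P) ?leq_maxl // (@pact_widen n Q) ?leq_maxr //.
by rewrite -big_split; apply: eq_bigr => i _; rewrite coefD mulrDl.
Qed.

Lemma pactN P f t : pact (- P) f t = - pact P f t.
Proof. by rewrite /pact size_polyN -sumrN; apply: eq_bigr => i _; rewrite coefN mulNr. Qed.

Lemma pact_sum (I : Type) (r : seq I) (F : I -> {poly int}) f t :
  pact (\sum_(i <- r) F i) f t = \sum_(i <- r) pact (F i) f t.
Proof. by elim: r => [|a r IH]; rewrite ?big_nil ?pact0 // !big_cons pactD IH. Qed.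

Lemma pactCM c P f t : pact (c%:P * P) f t = c * pact P f t.
Proof.
rewrite (@pact_widen (size P)) ?(leq_trans (size_polyMleq _ _)) //; last first.
  by rewrite size_polyC; case: (c != 0) => /=; lia.
by rewrite /pact mulr_sumr; apply: eq_bigr => i _; rewrite coefCM mulrA.
Qed.

Lemma pactMX P f t : pact (P * 'X) f t = pact P f (t - 1).
Proof.
rewrite (@pact_widen (size P).+1); last first.
  by rewrite (leq_trans (size_polyMleq _ _)) // size_polyX addn2.
rewrite big_ord_recl coefMX mul0r add0r; apply: eq_bigr => i _.
by rewrite coefMX /=; congr (_ * f _); rewrite /bump /= add1n -addn1 PoszD; ring.
Qed.

Lemma pactMXn P n f t : pact (P * 'X^n) f t = pact P f (t - n%:Z).
Proof.
elim: n t => [|n IH] t; first by rewrite expr0 mulr1 subr0.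
by rewrite exprSr mulrA pactMX IH -addn1 PoszD; congr pact; ring.
Qed.

Lemma pact_scalef c P f t : pact P (fun u => c * f u) t = c * pact P f t.
Proof. by rewrite /pact mulr_sumr; apply: eq_bigr => i _; rewrite mulrCA. Qed.

Lemma pact_f0 P f t : f =1 (fun=> 0) -> pact P f t = 0.
Proof. by move=> f0; apply: big1 => i _; rewrite f0 mulr0. Qed.

Lemma pactM P Q f t : pact (P * Q) f t = pact P (pact Q f) t.
Proof.
elim/poly_ind: P t => [|P c IH] t; first by rewrite mul0r !pact0.
by rewrite mulrDl pactD pactCM -mulrA (mulrC 'X) mulrA pactMX IH pactD pactMX pactC.
Qed.

End PolyAction.

Lemma gbinom0 (x : rat) : gbinom x 0 = 1.
Proof. by rewrite /gbinom big_ord0 fact0 divr1. Qed.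

Lemma gbinom0S l : gbinom 0 l.+1 = 0.
Proof. by rewrite /gbinom big_ord_recl subrr !mul0r. Qed.

Lemma gbinomS (x : rat) l : gbinom (x + 1) l.+1 = gbinom x l.+1 + gbinom x l.
Proof.
rewrite /gbinom big_ord_recl big_ord_recr /= subr0.
have -> : \prod_(i < l) (x + 1 - (bump 0 i)%:R) = \prod_(i < l) (x - i%:R).
  by apply: eq_bigr => i _; rewrite /bump /= add1n -addn1 natrD opprD addrACA subrr addr0.
have fact_neq0 : (l`!)%:R != 0 :> rat by rewrite pnatr_eq0 -lt0n fact_gt0.
rewrite factS natrM -[l.+1]addn1 natrD; field.
by rewrite fact_neq0 natr1 pnatr_eq0.
Qed.

Lemma gbinom_int (x : int) l : exists z : int, gbinom x%:~R l = z%:~R.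
Proof.
elim: l x => [|l IHl] x; first by exists 1; rewrite gbinom0.
have intrS (m : int) : (m + 1)%:~R = m%:~R + 1 :> rat by rewrite intrD.
elim/int_rec: x => [|n [z Ez]|n [z Ez]]; first by exists 0; rewrite gbinom0S.
  have [w Ew] := IHl n; exists (z + w).
  by rewrite -addn1 PoszD intrS gbinomS Ez Ew intrD.
have [w Ew] := IHl (- n.+1%:Z); exists (z - w).
have defn : - n%:Z = - n.+1%:Z + 1 by rewrite -addn1 PoszD opprD addrNK.
by move: Ez; rewrite defn intrS gbinomS Ew intrB => <-; rewrite addrK.
Qed.

Definition binz (x : int) (l : nat) : int := numq (gbinom x%:~R l).

Lemma binzE x l : (binz x l)%:~R = gbinom x%:~R l.
Proof. by have [z Ez] := gbinom_int x l; rewrite /binz Ez numq_int. Qed.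

Lemma binz0 x : binz x 0 = 1.
Proof. by apply: (@intr_inj rat); rewrite binzE gbinom0. Qed.

Lemma binzS x l : binz (x + 1) l.+1 = binz x l.+1 + binz x l.
Proof. by apply: (@intr_inj rat); rewrite intrD !binzE intrD gbinomS. Qed.

Local Notation Δ := (1 - 'X : {poly int}).

Lemma pact_delta f u : pact Δ f u = f u - f (u - 1).
Proof. by rewrite pactD pactN -['X]mul1r pactMX !pact1. Qed.

Lemma pact_deltaXn n f u : pact (1 - 'X^n) f u = f u - f (u - n%:Z).
Proof. by rewrite pactD pactN -['X^n]mul1r pactMXn !pact1. Qed.

Lemma coef_delta_exp n i : (Δ ^+ n)`_i = (-1) ^+ i * 'C(n, i)%:R.
Proof.
elim: n i => [|n IH] [|i]; rewrite ?expr0 ?coef1 ?mulr0 //.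
  by rewrite exprSr mulrBr mulr1 coefB coefMX IH /= !bin0 subr0.
by rewrite exprSr mulrBr mulr1 coefB coefMX /= !IH binS natrD exprS; ring.
Qed.

Lemma pact_delta_expE n f t :
  pact (Δ ^+ n) f t = \sum_(i < n.+1) (-1) ^+ i * 'C(n, i)%:R * f (t - i%:Z).
Proof.
rewrite (@pact_widen n.+1); first by apply: eq_bigr => i _; rewrite coef_delta_exp.
by apply/leq_sizeP => j lt_nj; rewrite coef_delta_exp bin_small ?mulr0.
Qed.

Definition negbinz (l : nat) (u : int) : int := binz (- u) l.

Lemma pact_delta_exp_negbinz j l u :
  pact (Δ ^+ j) (negbinz l) u = if (j <= l)%N then (-1) ^+ j * negbinz (l - j) u else 0.
Proof.
have delta_negbinzS k v : pact Δ (negbinz k.+1) v = - negbinz k v.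
  by rewrite pact_delta /negbinz opprB [1 - v]addrC binzS opprD addNKr.
elim: j u => [|j IH] u; first by rewrite expr0 pact1 subn0 mul1r.
rewrite exprS pactM (eq_pact _ IH).
have [le_jl | lt_lj] := leqP j l; last by rewrite ifF ?pact_f0 //; lia.
rewrite /= pact_scalef; have [lt_jl | le_lj] := ltnP j l.
  by rewrite -subnSK // delta_negbinzS exprS mulN1r mulrN mulNr.
have -> : (l - j)%N = 0%N by lia.
by rewrite pact_delta /negbinz !binz0 subrr mulr0.
Qed.

Definition dilate (p : nat) (f : int -> int) (u : int) : int :=
  if (p%:Z %| u)%Z then f (u %/ p%:Z)%Z else 0.

Lemma dilateM p f k : (0 < p)%N -> dilate p f (k * p%:Z) = f k.
Proof. by move=> p_gt0; rewrite /dilate dvdz_mull ?dvdzz // mulzK // eqz_nat -lt0n. Qed.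

Lemma dilate_ndvd p f u : ~~ (p%:Z %| u)%Z -> dilate p f u = 0.
Proof. by rewrite /dilate => /negbTE->. Qed.

Lemma pact_delta_exp_dilate_small p n0 g r : (0 < p)%N -> (n0 < p)%N ->
  pact (Δ ^+ n0) (dilate p g) r =
  (-1) ^+ `|(r %% p%:Z)%Z|%N * 'C(n0, `|(r %% p%:Z)%Z|%N)%:R * g (r %/ p%:Z)%Z.
Proof.
move=> p_gt0 lt_n0p; set r0 := `|(r %% p%:Z)%Z|%N; set q := (r %/ p%:Z)%Z.
have def_r0 : (r %% p%:Z)%Z = r0%:Z by rewrite /r0 gez0_abs // modz_ge0 // eqz_nat -lt0n.
have lt_r0p : (r0 < p)%N by rewrite -ltz_nat -def_r0 ltz_pmod // ltz_nat.
have def_r : r = q * p%:Z + r0%:Z by rewrite -def_r0 /q -divz_eq.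
rewrite pact_delta_expE (eq_bigr (fun k : 'I_n0.+1 =>
    if k == r0 :> nat then (-1) ^+ r0 * 'C(n0, r0)%:R * g q else 0)); last first.
  move=> k _; case: eqP => [-> | ne_kr0].
    by rewrite {1}def_r addrK dilateM.
  rewrite dilate_ndvd ?mulr0 //; apply/negP => dvd_rk.
  have : (p%:Z %| r0%:Z - k%:Z)%Z.
    have -> : r0%:Z - k%:Z = (r - k%:Z) - q * p%:Z by rewrite {1}def_r; ring.
    by rewrite rpredB // dvdz_mull.
  by rewrite dvdzE absz_nat => /dvdn_leq; have := ltn_ord k; lia.
rewrite -big_mkcond (big_ord1_eq _ (fun=> _)); case: ltnP => // le_n0r0.
by rewrite bin_small ?mulr0 ?mul0r.
Qed.

Lemma pact_deltaXn_exp_dilate p j f u : (0 < p)%N ->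
  pact ((1 - 'X^p) ^+ j) (dilate p f) u = dilate p (pact (Δ ^+ j) f) u.
Proof.
move=> p_gt0; elim: j u => [|j IH] u.
  by rewrite !expr0 !pact1 /dilate; case: ifP; rewrite ?pact1.
rewrite exprS pactM (eq_pact _ IH) pact_deltaXn.
have [/dvdzP [k ->] | ndvd] := boolP (p%:Z %| u)%Z.
  have -> : k * p%:Z - p%:Z = (k - 1) * p%:Z by rewrite mulrBl mul1r.
  by rewrite !dilateM // exprS pactM pact_delta.
have ndvd' : ~~ (p%:Z %| u - p%:Z)%Z by rewrite -(rpredDr _ (dvdzz p)) subrK.
by rewrite !dilate_ndvd // subrr.
Qed.

Lemma pact_dilate_delta_exp_negbinz P p j l u :
  pact P (dilate p (pact (Δ ^+ j) (negbinz l))) u =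
  if (j <= l)%N then (-1) ^+ j * pact P (dilate p (negbinz (l - j))) u else 0.
Proof.
case: leqP => [le_jl | lt_lj]; last first.
  by apply: pact_f0 => v; rewrite /dilate; case: ifP; rewrite // pact_delta_exp_negbinz leqNgt lt_lj.
rewrite -pact_scalef; apply: eq_pact => v.
by rewrite /dilate; case: ifP; rewrite ?mulr0 // pact_delta_exp_negbinz le_jl.
Qed.

Lemma delta_exp_prime_decomp p : prime p ->
  exists W : {poly int}, Δ ^+ p = (1 - 'X^p) + p%:R * (Δ * W).
Proof.
move=> p_pr; have p_gt0 := prime_gt0 p_pr.
set Q := Δ ^+ p - (1 - 'X^p).
have dvd_Q i : (p%:Z %| Q`_i)%Z.
  rewrite coefB coefB coef1 coefXn coef_delta_exp.
  have p_neq0 : (0 == p) = false by rewrite eq_sym eqn0Ngt p_gt0.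
  case: i => [|i]; first by rewrite p_neq0 bin0.
  case: (ltngtP i.+1 p) => [lt_ip | lt_pi | ->] /=.
  - by rewrite subrr subr0 dvdz_mull // natz dvdzE !absz_nat prime_dvd_bin // lt_ip.
  - by rewrite bin_small // mulr0 subrr dvdz0.
  rewrite binn mulr1; have [->|odd_p] := even_prime p_pr; first exact: dvdzz.
  by rewrite -signr_odd odd_p expr1 eq_sym p_neq0 /= sub0r opprK subrr dvdz0.
pose E := \poly_(i < size Q) (Q`_i %/ p%:Z)%Z.
have defQ : Q = p%:R * E.
  apply/polyP => i; rewrite -polyC_natr coefCM coef_poly; case: ltnP => [_|le_Qi].
    by rewrite mulrC natz divzK.
  by rewrite mulr0 nth_default.
have E1 : root E 1.
  have /eqP : (p%:R * E).[1] = 0.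
    by rewrite -defQ !hornerE subrr expr1n subrr expr0n eqn0Ngt p_gt0 subr0.
  by rewrite -polyC_natr hornerE mulf_eq0 pnatr_eq0 eqn0Ngt p_gt0.
have [W defE] := factor_theorem E 1 E1; exists (- W).
by rewrite -[LHS](subrK (1 - 'X^p)) -/Q defQ defE polyC1; ring.
Qed.

Lemma dvdz_pexpM (p a b : nat) (x y : int) :
  ((p ^ a)%:Z %| x)%Z -> ((p ^ b)%:Z %| y)%Z -> ((p ^ (a + b))%:Z %| x * y)%Z.
Proof. by move=> dvd_x dvd_y; rewrite expnD PoszM dvdz_mul. Qed.

Lemma dvdz_pexp_leq (p a b : nat) (x : int) :
  (a <= b)%N -> ((p ^ b)%:Z %| x)%Z -> ((p ^ a)%:Z %| x)%Z.
Proof. by move=> le_ab; apply: dvdz_trans; rewrite dvdzE !absz_nat dvdn_exp2l. Qed.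

Lemma dvdz_pfactor_logn (p n : nat) : ((p ^ logn p n)%:Z %| n%:R)%Z.
Proof. by rewrite natz dvdzE !absz_nat pfactor_dvdnn. Qed.

Lemma dvdz_pact (d : int) P f t : (forall u, (d %| f u)%Z) -> (d %| pact P f t)%Z.
Proof. by move=> dvd_f; apply: rpred_sum => i _; rewrite dvdz_mull. Qed.

Lemma dvdz_scale_pact_dilate p (d K : int) P f t :
  (forall u, (d %| K * f u)%Z) -> (d %| K * pact P (dilate p f) t)%Z.
Proof.
move=> dvd_f; rewrite -pact_scalef; apply: dvdz_pact => u.
by rewrite /dilate; case: ifP; rewrite ?mulr0 ?dvdz0.
Qed.

Definition Tscale (p l : nat) : int := (l`! * p ^ l)%:R.

Lemma Tscale_split p j l : (j <= l)%N ->
  Tscale p l = ('C(l, j) * j`! * p ^ j)%:R * Tscale p (l - j).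
Proof.
move=> le_jl; rewrite /Tscale -natrM; congr _%:R.
by rewrite -(bin_fact le_jl) -{3}(subnK le_jl) expnD; ring.
Qed.

(* With [u = r - k], the paper's [binom((k - r)/p^β, l)] is [Tker p β l u]. *)
Definition Tker (p b l : nat) : int -> int := iter b (dilate p) (negbinz l).

Lemma TkerS p b l : Tker p b.+1 l = dilate p (Tker p b l).
Proof. by []. Qed.

Section DilatedDifferences.

Variables (p : nat) (W : {poly int}).
Hypothesis p_pr : prime p.
Hypothesis delta_expp : Δ ^+ p = (1 - 'X^p) + p%:R * (Δ * W).

Let p_gt0 := prime_gt0 p_pr.

Lemma pact_delta_exp_dilate_expand M n0 f t :
  pact (Δ ^+ (p * M + n0)) (dilate p f) t =
  \sum_(i < M.+1) ('C(M, i) * p ^ i)%:R *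
     pact (Δ ^+ n0 * (Δ * W) ^+ i) (dilate p (pact (Δ ^+ (M - i)) f)) t.
Proof.
rewrite exprD exprM delta_expp exprDn mulr_suml pact_sum; apply: eq_bigr => i _.
have -> : (1 - 'X^p) ^+ (M - i) * (p%:R * (Δ * W)) ^+ i *+ 'C(M, i) * Δ ^+ n0 =
    ('C(M, i) * p ^ i)%:R%:P * ((Δ ^+ n0 * (Δ * W) ^+ i) * (1 - 'X^p) ^+ (M - i)).
  by rewrite polyC_natr natrM natrX -mulr_natl exprMn; ring.
by rewrite pactCM pactM; congr (_ * _); apply: eq_pact => u; rewrite pact_deltaXn_exp_dilate.
Qed.

Lemma dvdz_Tscale_pact_dilate_negbinz N l t :
  ((p ^ logn p N`!)%:Z %| Tscale p l * pact (Δ ^+ N) (dilate p (negbinz l)) t)%Z.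
Proof.
elim/ltn_ind: N l t => N IH l t.
rewrite logn_fact_rec //; set M := (N %/ p)%N; set n0 := (N %% p)%N.
have [-> | M_gt0] := posnP M; first by rewrite fact0 logn1 expn0 dvd1z.
have lt_MN : (M < N)%N.
  by rewrite ltn_Pdiv ?prime_gt1 // (leq_trans M_gt0) ?leq_div.
have -> : Δ ^+ N = Δ ^+ (p * M + n0) by rewrite /M /n0 mulnC -divn_eq.
rewrite pact_delta_exp_dilate_expand mulr_sumr.
apply: rpred_sum => i _; have le_iM : (i <= M)%N by rewrite -ltnS.
set j := (M - i)%N.
have -> : Δ ^+ n0 * (Δ * W) ^+ i = Δ ^+ n0 * W ^+ i * Δ ^+ i by rewrite exprMn; ring.
rewrite pactM (eq_pact _ (pact_dilate_delta_exp_negbinz _ p j l)).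
have [le_jl | lt_lj] := leqP j l; last by rewrite pact_f0 ?mulr0 ?dvdz0.
set Y := pact (Δ ^+ i) (dilate p (negbinz (l - j))).
rewrite /= pact_scalef (Tscale_split p le_jl).
have dvd_Y : ((p ^ logn p i`!)%:Z %| Tscale p (l - j) * pact (Δ ^+ n0 * W ^+ i) Y t)%Z.
  by rewrite -pact_scalef; apply: dvdz_pact => u; apply: IH (leq_ltn_trans le_iM lt_MN) _ _.
set Z := Tscale p (l - j) * _ in dvd_Y.
have -> : ('C(l, j) * j`! * p ^ j)%:R * Tscale p (l - j) *
    (('C(M, i) * p ^ i)%:R * ((-1) ^+ j * pact (Δ ^+ n0 * W ^+ i) Y t)) =
    (-1) ^+ j * (('C(l, j) * j`! * p ^ j * ('C(M, i) * p ^ i))%:R * Z).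
  by rewrite /Z natrM; ring.
apply/dvdz_mull/(dvdz_pexp_leq _ (dvdz_pexpM (dvdz_pfactor_logn _ _) dvd_Y)).
(* [v_p(N!) = M + v_p(M!)] and [v_p(M!) = v_p(C(M,i)) + v_p(i!) + v_p(j!)]: the factors
   [p^j j!] of [Tscale p l], [p^i C(M,i)] and the induction hypothesis at [i < N] suffice. *)
rewrite !lognM ?muln_gt0 ?bin_gt0 ?le_jl ?le_iM ?fact_gt0 ?expn_gt0 ?p_gt0 //.
by rewrite !(pfactorK _ p_pr) (logn_fact_bin p le_iM) -/j; lia.
Qed.

Lemma dvdz_pact_dilate_sub c (K : int) f :
  (forall N u, ((p ^ logn p (N %/ p ^ c)`!)%:Z %| K * pact (Δ ^+ N) f u)%Z) ->
  forall M n0 t, ((p ^ (logn p (M %/ p ^ c)`!).+1)%:Z %|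
    K * (pact (Δ ^+ (p * M + n0)) (dilate p f) t -
         pact (Δ ^+ n0) (dilate p (pact (Δ ^+ M) f)) t))%Z.
Proof.
move=> dvd_f M n0 t; rewrite pact_delta_exp_dilate_expand big_ord_recl.
rewrite bin0 expn0 mul1r subn0 expr0 mulr1 addrC addKr mulr_sumr.
apply: rpred_sum => i _; rewrite mulrCA natrM -mulrA.
have lt0iM : (0 < bump 0 i <= M)%N by rewrite /bump /= add1n ltn_ord.
apply: dvdz_pexp_leq (logn_fact_divn_exp_bin p_pr c lt0iM) _; rewrite -addnA.
apply: dvdz_pexpM; first exact: dvdz_pfactor_logn.
apply: dvdz_pexpM; first by rewrite natz dvdzz.
by apply: dvdz_scale_pact_dilate => u; apply: dvd_f.
Qed.

Lemma dvdz_Tscale_pact_Tker l b N u :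
  ((p ^ logn p (N %/ p ^ b)`!)%:Z %| Tscale p l * pact (Δ ^+ N) (Tker p b.+1 l) u)%Z.
Proof.
elim: b N u => [|b IH] N u.
  by rewrite expn0 divn1; apply: dvdz_Tscale_pact_dilate_negbinz.
set M := (N %/ p)%N; set n0 := (N %% p)%N.
have -> : (N %/ p ^ b.+1 = M %/ p ^ b)%N by rewrite expnS divnMA.
have -> : Δ ^+ N = Δ ^+ (p * M + n0) by rewrite /M /n0 mulnC -divn_eq.
set g := pact (Δ ^+ n0) (dilate p (pact (Δ ^+ M) (Tker p b.+1 l))) u.
rewrite TkerS -[X in _ * X](subrK g) mulrDr rpredD //.
  exact: dvdz_pexp_leq (leqnSn _) (dvdz_pact_dilate_sub IH _ _ _).
by apply: dvdz_scale_pact_dilate => v; apply: IH.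
Qed.

Lemma dvdz_Tscale_pact_Tker_sub a n l r :
  ((p ^ (logn p (n %/ p ^ a.+1)`!).+1)%:Z %| Tscale p l *
    (pact (Δ ^+ n) (Tker p a.+2 l) r -
     (-1) ^+ `|(r %% p%:Z)%Z|%N * 'C(n %% p, `|(r %% p%:Z)%Z|%N)%:R *
       pact (Δ ^+ (n %/ p)) (Tker p a.+1 l) (r %/ p%:Z)%Z))%Z.
Proof.
set M := (n %/ p)%N; set n0 := (n %% p)%N.
have -> : (n %/ p ^ a.+1 = M %/ p ^ a)%N by rewrite expnS divnMA.
have -> : Δ ^+ n = Δ ^+ (p * M + n0) by rewrite /M /n0 mulnC -divn_eq.
have lt_n0p : (n0 < p)%N by rewrite ltn_pmod.
rewrite -(pact_delta_exp_dilate_small (pact (Δ ^+ M) (Tker p a.+1 l)) r p_gt0 lt_n0p).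
rewrite TkerS; exact: dvdz_pact_dilate_sub (dvdz_Tscale_pact_Tker l a) M n0 r.
Qed.

End DilatedDifferences.

Lemma TkerE p b l u : (0 < p)%N ->
  Tker p b l u = if ((p ^ b)%:Z %| u)%Z then negbinz l (u %/ (p ^ b)%:Z)%Z else 0.
Proof.
move=> p_gt0; elim: b u => [|b IH] u; first by rewrite expn0 dvd1z divz1.
have p_neq0 : p%:Z != 0 by rewrite eqz_nat -lt0n.
rewrite TkerS expnSr PoszM; have [/dvdzP [w ->] | ndvd] := boolP (p%:Z %| u)%Z.
  by rewrite dilateM // IH dvdz_mul2r // divzMpr.
rewrite dilate_ndvd // ifF //; apply: contraNF ndvd; apply: dvdz_trans.
exact: dvdz_mull.
Qed.

Lemma T_pact p l b n r : (0 < p)%N ->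
  T p l b n r = (Tscale p l)%:~R / ((n %/ p ^ (b - 1))`!)%:R *
                (pact (Δ ^+ n) (Tker p b l) r)%:~R.
Proof.
move=> p_gt0; rewrite /T /Tscale natz -pmulrn natrM; congr (_ * _).
rewrite pact_delta_expE rmorph_sum big_mkcond big_mkord; apply: eq_bigr => k _.
rewrite TkerE // -[r - k%:Z]opprB rpredN; case: ifP => [/dvdzP [z ->] | _]; last by rewrite mulr0.
have pb_neq0 : (p ^ b)%:Z != 0 by rewrite eqz_nat -lt0n expn_gt0 p_gt0.
rewrite -mulNr !mulzK // /negbinz opprK !rmorphM rmorphXn rmorphN1 rmorph_nat /=.
by rewrite binzE [_%:R * _]mulrC.
Qed.

Lemma dvdz_numq_div p (x : int) (d : nat) : prime p -> (0 < d)%N ->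
  ((p ^ (logn p d).+1)%:Z %| x)%Z -> (p%:Z %| numq (x%:~R / d%:R : rat))%Z.
Proof.
move=> p_pr d_gt0 /dvdzP [z ->].
have [u cop_pu def_d] := pfactor_coprime p_pr d_gt0.
have u_gt0 : (0 < u)%N by move: d_gt0; rewrite def_d muln_gt0 => /andP [].
have u_neq0 : u%:R != 0 :> rat by rewrite pnatr_eq0 -lt0n.
have pv_neq0 : (p ^ logn p d)%:R != 0 :> rat by rewrite pnatr_eq0 -lt0n expn_gt0 prime_gt0.
set y := _ / _; have def_y : y = (z * p%:Z)%:~R / u%:R.
  by rewrite /y {2}def_d expnSr !PoszM !intrM -!pmulrn !natrM; field; apply/andP.
have : (numq y * u%:Z)%:~R = (z * p%:Z * denq y)%:~R :> rat.
  by rewrite intrM numqE {1}def_y -pmulrn !intrM; field.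
move/intr_inj => numq_eq; rewrite -(Gauss_dvdzl _ (_ : coprimez p u)) ?numq_eq.
  exact/dvdz_mulr/dvdz_mull/dvdzz.
by rewrite coprimezE !absz_nat.
Qed.

Theorem theorem1p5 (p alpha l n : nat) (r : int) :
  prime p -> (2 <= alpha)%N ->
  ratcong p 1
    (T p l alpha.+1 n r)
    ((-1) ^+ `|(r %% p)%Z|%N * ('C(n %% p, `|(r %% p)%Z|%N))%:R *
       T p l alpha (n %/ p) (r %/ p)%Z).
Proof.
move=> p_pr; case: alpha => [|a] // _; have p_gt0 := prime_gt0 p_pr.
have [W delta_expp] := delta_exp_prime_decomp p_pr.
rewrite /ratcong expn1 !T_pact // !subSS !subn0 -divnMA -expnS.
set D := (n %/ p ^ a.+1)%N; set r0 := `|(r %% p)%Z|%N.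
set A := pact _ (Tker p a.+2 l) r; set B := pact _ (Tker p a.+1 l) _.
have -> : (Tscale p l)%:~R / D`!%:R * A%:~R -
    (-1) ^+ r0 * 'C(n %% p, r0)%:R * ((Tscale p l)%:~R / D`!%:R * B%:~R) =
    (Tscale p l * (A - (-1) ^+ r0 * 'C(n %% p, r0)%:R * B))%:~R / D`!%:R :> rat.
  by rewrite !rmorphM rmorphB !rmorphM rmorphXn rmorphN1 rmorph_nat /=; ring.
apply: (dvdz_numq_div p_pr (fact_gt0 D)).
exact: dvdz_Tscale_pact_Tker_sub p_pr delta_expp a n l r.
Qed.
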